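(* The pair of varieties $(\mathrm{RB}\,\mathrm{As},\mathrm{pre}\,\mathrm{As})$, with the functor $\psi$ described below, is not a PBW-pair.
   Context: $\mathrm{RB}\,\mathrm{As}$ is the variety of associative algebras with a Rota–Baxter operator of weight $0$ (a linear map $R$ with $R(x)R(y)=R(R(x)y+xR(y))$); $\mathrm{pre}\,\mathrm{As}$ is the variety of preassociative algebras (vector spaces with bilinear $\succ,\prec$ satisfying $(x_1\succ x_2+x_1\prec x_2)\succ x_3 = x_1\succ (x_2 \succ x_3)$, $(x_1\succ x_2)\prec x_3=x_1\succ(x_2\prec x_3)$, $x_1\prec(x_2\succ x_3+x_2\prec x_3)=(x_1\prec x_2)\prec x_3$). The functor $\psi:\mathrm{RB}\,\mathrm{As}\to\mathrm{pre}\,\mathrm{As}$ sends an RB-algebra $(B,R)$ to the same space with $x\succ y=R(x)y$, $x\prec y=xR(y)$. Its left adjoint gives the universal enveloping RB-algebra $U(A)$ of a preassociative algebra $A$. A pair of varieties $(\mathcal V,\mathcal W)$ with such a functor $\psi$ (preserving the underlying space and changing operations) is a PBW-pair (in the sense of Mikhalev–Shestakov) if for every $A\in\mathcal W$ the associated graded algebra $\mathrm{gr}\,U(A)$ with respect to the natural ascending filtration of $U(A)$ is isomorphic to $U(\mathrm{Ab}\,A)$, where $\mathrm{Ab}\,A$ denotes the space $A$ with all operations zero. *)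

From HB Require Import structures.
From mathcomp Require Import all_boot all_order all_algebra.
Set Implicit Arguments. Unset Strict Implicit. Unset Printing Implicit Defensive.
Import GRing.Theory.
Local Open Scope ring_scope.

Section RBPre.
Variable K : fieldType.

Definition lin (V W : lmodType K) (f : V -> W) : Prop :=
  forall (a : K) (x y : V), f (a *: x + y) = a *: f x + f y.

Definition bilin (V : lmodType K) (m : V -> V -> V) : Prop :=
  (forall x, lin (m x)) /\ (forall y, lin (fun x => m x y)).

Definition is_RBAs (V : lmodType K) (mul : V -> V -> V) (R : V -> V) : Prop :=
  [/\ bilin mul,
      (forall x y z, mul (mul x y) z = mul x (mul y z)),
      lin R &
      (forall x y, mul (R x) (R y) = R (mul (R x) y + mul x (R y)))].

Definition is_preAs (A : lmodType K) (sc pr : A -> A -> A) : Prop :=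
  [/\ bilin sc, bilin pr,
      (forall x1 x2 x3, sc (sc x1 x2 + pr x1 x2) x3 = sc x1 (sc x2 x3)),
      (forall x1 x2 x3, pr (sc x1 x2) x3 = sc x1 (pr x2 x3)) &
      (forall x1 x2 x3, pr x1 (sc x2 x3 + pr x2 x3) = pr (pr x1 x2) x3)].

Definition psi_succ (V : lmodType K) (mul : V -> V -> V) (R : V -> V) :=
  fun x y => mul (R x) y.
Definition psi_prec (V : lmodType K) (mul : V -> V -> V) (R : V -> V) :=
  fun x y => mul x (R y).

Definition preAs_hom (A B : lmodType K) (sA pA : A -> A -> A)
  (sB pB : B -> B -> B) (f : A -> B) : Prop :=
  [/\ lin f, (forall x y, f (sA x y) = sB (f x) (f y)) &
             (forall x y, f (pA x y) = pB (f x) (f y))].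

Definition RB_hom (U B : lmodType K) (mU : U -> U -> U) (RU : U -> U)
  (mB : B -> B -> B) (RB : B -> B) (g : U -> B) : Prop :=
  [/\ lin g, (forall x y, g (mU x y) = mB (g x) (g y)) &
             (forall x, g (RU x) = RB (g x))].

Definition univ_env (A : lmodType K) (sA pA : A -> A -> A)
  (U : lmodType K) (mU : U -> U -> U) (RU : U -> U) (iota : A -> U) : Prop :=
  [/\ is_RBAs mU RU,
      preAs_hom sA pA (psi_succ mU RU) (psi_prec mU RU) iota &
      forall (B : lmodType K) (mB : B -> B -> B) (RB : B -> B) (f : A -> B),
        is_RBAs mB RB ->
        preAs_hom sA pA (psi_succ mB RB) (psi_prec mB RB) f ->
        (exists g : U -> B, RB_hom mU RU mB RB g /\ forall a, g (iota a) = f a) /\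
        (forall g1 g2 : U -> B,
           RB_hom mU RU mB RB g1 -> (forall a, g1 (iota a) = f a) ->
           RB_hom mU RU mB RB g2 -> (forall a, g2 (iota a) = f a) ->
           forall x, g1 x = g2 x)].

Section Filtration.
Variables (A U : lmodType K) (mU : U -> U -> U) (RU : U -> U) (iota : A -> U).

Inductive mono : nat -> U -> Prop :=
| mono_gen (a : A) : mono 1 (iota a)
| mono_mul n m x y : mono n x -> mono m y -> mono (n + m) (mU x y)
| mono_R n x : mono n x -> mono n (RU x).

Inductive filt (n : nat) : U -> Prop :=
| filt_zero : filt n 0
| filt_mono k x : (k <= n)%N -> mono k x -> filt n x
| filt_comb (a : K) x y : filt n x -> filt n y -> filt n (a *: x + y).

(* gr U = (+)_n F_n / F_(n-1), elements represented by sequences g with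
   g n in F_n and g n = 0 for n large; equality modulo F_(n-1) componentwise *)
Definition gr_elem (g : nat -> U) : Prop :=
  (forall n, filt n (g n)) /\ exists N, forall n, (N < n)%N -> g n = 0.

Definition gr_eq (g h : nat -> U) : Prop := forall n, filt n.-1 (g n - h n).

Definition gr_mul (g h : nat -> U) : nat -> U :=
  fun k => \sum_(i < k.+1) mU (g i) (h (k - i)%N).

Definition gr_R (g : nat -> U) : nat -> U := fun n => RU (g n).

Definition gr_iso (U' : lmodType K) (mU' : U' -> U' -> U') (RU' : U' -> U')
  (Phi : U' -> nat -> U) : Prop :=
  (forall x, gr_elem (Phi x)) /\
  (forall a x y, gr_eq (Phi (a *: x + y)) (fun n => a *: Phi x n + Phi y n)) /\
  (forall x y, gr_eq (Phi (mU' x y)) (gr_mul (Phi x) (Phi y))) /\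
  (forall x, gr_eq (Phi (RU' x)) (gr_R (Phi x))) /\
  (forall x, gr_eq (Phi x) (fun _ => 0) -> x = 0) /\
  (forall g, gr_elem g -> exists x, gr_eq (Phi x) g).

End Filtration.

(* (RB As, pre As) is a PBW-pair: for every preassociative A,
   gr U(A) is isomorphic to U(Ab A) *)
Definition PBW_pair_RBAs_preAs : Prop :=
  forall (A : lmodType K) (sA pA : A -> A -> A), is_preAs sA pA ->
  forall (U : lmodType K) (mU : U -> U -> U) (RU : U -> U) (iota : A -> U),
    univ_env sA pA mU RU iota ->
  forall (U' : lmodType K) (mU' : U' -> U' -> U') (RU' : U' -> U') (iota' : A -> U'),
    univ_env (fun _ _ => 0) (fun _ _ => 0) mU' RU' iota' ->
  exists Phi : U' -> nat -> U, gr_iso mU RU iota mU' RU' Phi.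

End RBPre.

(* Take A = K with x succ y = xy and x prec y = 0.  In U(A) two generators
   multiply to zero: iota b = R(iota 1) iota b and iota a R(iota 1) =
   iota (a prec 1) = 0.  Hence every homogeneous product in gr U(A) is the
   class of a product one of whose factors is itself a product or lies in
   the image of R.  Transporting along an isomorphism Phi : U(Ab A) ~ gr U(A),
   every product x y in U(Ab A) equals an element built from such products,
   and all of these are killed by any RB-homomorphism g into the algebra
   B = Ke + Kf with ee = f and all other products and R zero.  But the g
   extending 1 |-> e maps iota' 1 * iota' 1 to f <> 0. *)

From HB Require Import structures.
From mathcomp Require Import all_boot all_order all_algebra.
From mathcomp Require Import boolp zify.
Set Implicit Arguments. Unset Strict Implicit. Unset Printing Implicit Defensive.
Import GRing.Theory.
Local Open Scope ring_scope.

Section LinearMaps.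
Variables (K : fieldType) (V W : lmodType K) (h : V -> W).
Hypothesis h_lin : lin h.

Lemma lin0 : h 0 = 0.
Proof.
have := h_lin 1 0 0; rewrite !scale1r !addr0 => e.
by apply: (addrI (h 0)); rewrite addr0 -e.
Qed.

Lemma linD x y : h (x + y) = h x + h y.
Proof. by have := h_lin 1 x y; rewrite !scale1r. Qed.

Lemma linZ a x : h (a *: x) = a *: h x.
Proof. by have := h_lin a x 0; rewrite !addr0 lin0 addr0. Qed.

Lemma linB x y : h (x - y) = h x - h y.
Proof. by rewrite linD -scaleN1r linZ scaleN1r. Qed.

End LinearMaps.

(** * The universal enveloping RB-algebra *)

Section FreeEnvelope.
Variables (K : fieldType) (A : lmodType K) (sc pr : A -> A -> A).

Inductive rbterm := Gen of A | Zero | Add of rbterm & rbterm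
  | Scale of K & rbterm | Mul of rbterm & rbterm | Rop of rbterm.

Inductive eqv : rbterm -> rbterm -> Prop :=
| eqv_refl t : eqv t t
| eqv_sym t u : eqv t u -> eqv u t
| eqv_trans t u v : eqv t u -> eqv u v -> eqv t v
| eqv_add t t' u u' : eqv t t' -> eqv u u' -> eqv (Add t u) (Add t' u')
| eqv_scale c t t' : eqv t t' -> eqv (Scale c t) (Scale c t')
| eqv_mul t t' u u' : eqv t t' -> eqv u u' -> eqv (Mul t u) (Mul t' u')
| eqv_rop t t' : eqv t t' -> eqv (Rop t) (Rop t')
| eqv_addA t u v : eqv (Add t (Add u v)) (Add (Add t u) v)
| eqv_addC t u : eqv (Add t u) (Add u t)
| eqv_add0 t : eqv (Add Zero t) t
| eqv_addN t : eqv (Add (Scale (-1) t) t) Zero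
| eqv_scaleA a b t : eqv (Scale a (Scale b t)) (Scale (a * b) t)
| eqv_scale1 t : eqv (Scale 1 t) t
| eqv_scaleDr a t u : eqv (Scale a (Add t u)) (Add (Scale a t) (Scale a u))
| eqv_scaleDl a b t : eqv (Scale (a + b) t) (Add (Scale a t) (Scale b t))
| eqv_mulDl t u v : eqv (Mul (Add t u) v) (Add (Mul t v) (Mul u v))
| eqv_mulDr t u v : eqv (Mul t (Add u v)) (Add (Mul t u) (Mul t v))
| eqv_mulZl a t u : eqv (Mul (Scale a t) u) (Scale a (Mul t u))
| eqv_mulZr a t u : eqv (Mul t (Scale a u)) (Scale a (Mul t u))
| eqv_mulA t u v : eqv (Mul (Mul t u) v) (Mul t (Mul u v))
| eqv_ropD t u : eqv (Rop (Add t u)) (Add (Rop t) (Rop u))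
| eqv_ropZ a t : eqv (Rop (Scale a t)) (Scale a (Rop t))
| eqv_rb t u : eqv (Mul (Rop t) (Rop u))
                   (Rop (Add (Mul (Rop t) u) (Mul t (Rop u))))
| eqv_gen a b c : eqv (Gen (a *: b + c)) (Add (Scale a (Gen b)) (Gen c))
| eqv_sc a b : eqv (Gen (sc a b)) (Mul (Rop (Gen a)) (Gen b))
| eqv_pr a b : eqv (Gen (pr a b)) (Mul (Gen a) (Rop (Gen b))).

(* The quotient by [eqv], encoded by the equivalence classes as predicates. *)
Definition free_rb := {P : rbterm -> Prop | exists t, P = eqv t}.
HB.instance Definition _ := gen_eqMixin free_rb.
HB.instance Definition _ := gen_choiceMixin free_rb.

Definition cl (t : rbterm) : free_rb := exist _ (eqv t) (ex_intro _ t erefl).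

Lemma eqv_cl t u : eqv t u -> cl t = cl u.
Proof.
move=> tu; apply: eq_exist; apply: funext => v; apply: propext.
by split; [apply: eqv_trans (eqv_sym tu) | apply: eqv_trans tu].
Qed.

Lemma cl_eqv t u : cl t = cl u -> eqv t u.
Proof. by move=> /(congr1 (@proj1_sig _ _)) /= ->; apply: eqv_refl. Qed.

Definition rep (x : free_rb) : rbterm := projT1 (cid (proj2_sig x)).

Lemma repK x : cl (rep x) = x.
Proof. by rewrite /rep; case: (cid _) => t /=; case: x => P ? /= e; apply: eq_exist. Qed.

Lemma rep_cl t : eqv (rep (cl t)) t.
Proof. by apply: cl_eqv; rewrite repK. Qed.

Lemma free_rb_ind (P : free_rb -> Prop) : (forall t, P (cl t)) -> forall x, P x.
Proof. by move=> Pcl x; rewrite -(repK x). Qed.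

Fact free_rb_key : unit. Proof. exact: tt. Qed.
Definition fadd := locked_with free_rb_key (fun x y => cl (Add (rep x) (rep y))).
Definition fscale := locked_with free_rb_key (fun c x => cl (Scale c (rep x))).
Definition fmul := locked_with free_rb_key (fun x y => cl (Mul (rep x) (rep y))).
Definition fR := locked_with free_rb_key (fun x => cl (Rop (rep x))).

Lemma faddE t u : fadd (cl t) (cl u) = cl (Add t u).
Proof. by rewrite [fadd]unlock; apply/eqv_cl/eqv_add; apply: rep_cl. Qed.
Lemma fscaleE c t : fscale c (cl t) = cl (Scale c t).
Proof. by rewrite [fscale]unlock; apply/eqv_cl/eqv_scale/rep_cl. Qed.
Lemma fmulE t u : fmul (cl t) (cl u) = cl (Mul t u).
Proof. by rewrite [fmul]unlock; apply/eqv_cl/eqv_mul; apply: rep_cl. Qed.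
Lemma fRE t : fR (cl t) = cl (Rop t).
Proof. by rewrite [fR]unlock; apply/eqv_cl/eqv_rop/rep_cl. Qed.

Lemma faddA : associative fadd.
Proof. by do 3!elim/free_rb_ind=> ?; rewrite !faddE; apply/eqv_cl/eqv_addA. Qed.
Lemma faddC : commutative fadd.
Proof. by do 2!elim/free_rb_ind=> ?; rewrite !faddE; apply/eqv_cl/eqv_addC. Qed.
Lemma fadd0 : left_id (cl Zero) fadd.
Proof. by elim/free_rb_ind=> ?; rewrite faddE; apply/eqv_cl/eqv_add0. Qed.
Lemma faddN : left_inverse (cl Zero) (fscale (-1)) fadd.
Proof. by elim/free_rb_ind=> ?; rewrite fscaleE faddE; apply/eqv_cl/eqv_addN. Qed.

HB.instance Definition _ := GRing.isZmodule.Build free_rb faddA faddC fadd0 faddN.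

Lemma cl_add t u : cl t + cl u = cl (Add t u). Proof. exact: faddE. Qed.

Lemma fscaleA a b x : fscale a (fscale b x) = fscale (a * b) x.
Proof. by elim/free_rb_ind: x => ?; rewrite !fscaleE; apply/eqv_cl/eqv_scaleA. Qed.
Lemma fscale1 : left_id 1 fscale.
Proof. by elim/free_rb_ind=> ?; rewrite fscaleE; apply/eqv_cl/eqv_scale1. Qed.
Lemma fscaleDr : right_distributive fscale +%R.
Proof.
move=> a; do 2!elim/free_rb_ind=> ?.
by rewrite !cl_add !fscaleE cl_add; apply/eqv_cl/eqv_scaleDr.
Qed.
Lemma fscaleDl x : {morph fscale^~ x : a b / a + b}.
Proof.
by elim/free_rb_ind: x => ? a b; rewrite !fscaleE cl_add; apply/eqv_cl/eqv_scaleDl.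
Qed.

HB.instance Definition _ :=
  GRing.Zmodule_isLmodule.Build K free_rb fscaleA fscale1 fscaleDr fscaleDl.

Lemma cl_scale c t : c *: cl t = cl (Scale c t). Proof. exact: fscaleE. Qed.

Definition clE := (cl_add, cl_scale, fmulE, fRE).

Definition fiota (a : A) : free_rb := cl (Gen a).

Lemma free_rb_RBAs : is_RBAs fmul fR.
Proof.
split.
- split; elim/free_rb_ind=> ? a; do 2!elim/free_rb_ind=> ?; rewrite !clE;
    apply: eqv_cl.
    apply: eqv_trans (eqv_mulDr _ _ _) _.
    by apply: eqv_add; [apply: eqv_mulZr | apply: eqv_refl].
  apply: eqv_trans (eqv_mulDl _ _ _) _.
  by apply: eqv_add; [apply: eqv_mulZl | apply: eqv_refl].
- by do 3!elim/free_rb_ind=> ?; rewrite !clE; apply/eqv_cl/eqv_mulA.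
- move=> a; do 2!elim/free_rb_ind=> ?; rewrite !clE; apply: eqv_cl.
  apply: eqv_trans (eqv_ropD _ _) _.
  by apply: eqv_add; [apply: eqv_ropZ | apply: eqv_refl].
- by do 2!elim/free_rb_ind=> ?; rewrite !clE; apply/eqv_cl/eqv_rb.
Qed.

Lemma fiota_hom : preAs_hom sc pr (psi_succ fmul fR) (psi_prec fmul fR) fiota.
Proof.
split=> [a b c|a b|a b]; rewrite /psi_succ /psi_prec /fiota !clE; apply: eqv_cl.
- exact: eqv_gen.
- exact: eqv_sc.
- exact: eqv_pr.
Qed.

Section Eval.
Variables (B : lmodType K) (mB : B -> B -> B) (RB : B -> B) (f : A -> B).
Hypotheses (B_RBAs : is_RBAs mB RB)
  (f_hom : preAs_hom sc pr (psi_succ mB RB) (psi_prec mB RB) f).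

Fixpoint term_eval t := match t with
  | Gen a => f a | Zero => 0 | Add t u => term_eval t + term_eval u
  | Scale c t => c *: term_eval t | Mul t u => mB (term_eval t) (term_eval u)
  | Rop t => RB (term_eval t) end.

Lemma term_eval_eqv t u : eqv t u -> term_eval t = term_eval u.
Proof.
case: B_RBAs => [[mBl mBr] mBA R_lin R_rb]; case: f_hom => f_lin f_sc f_pr.
elim=> {t u}; intros; rewrite /=; try congruence.
all: first [ by rewrite addrA | by rewrite addrC | by rewrite add0r
  | by rewrite scaleN1r addNr | by rewrite scalerA | by rewrite scale1r
  | by rewrite scalerDr | by rewrite scalerDl | by rewrite (linD (mBr _))
  | by rewrite (linD (mBl _)) | by rewrite (linZ (mBr _)) | by rewrite (linZ (mBl _))
  | by rewrite mBA | by rewrite (linD R_lin) | by rewrite (linZ R_lin)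
  | by rewrite R_rb | by rewrite f_lin | by rewrite f_sc | by rewrite f_pr ].
Qed.

Definition free_rb_eval (x : free_rb) := term_eval (rep x).

Lemma free_rb_evalE t : free_rb_eval (cl t) = term_eval t.
Proof. exact/term_eval_eqv/rep_cl. Qed.

Lemma free_rb_eval_hom : RB_hom fmul fR mB RB free_rb_eval.
Proof.
split=> [a||]; do ?elim/free_rb_ind=> ?; by rewrite !clE !free_rb_evalE.
Qed.

End Eval.

Lemma free_rb_univ_env : univ_env sc pr fmul fR fiota.
Proof.
split; [exact: free_rb_RBAs | exact: fiota_hom |].
move=> B mB RB f B_RBAs f_hom; split.
  exists (free_rb_eval mB RB f); split; first exact: free_rb_eval_hom.
  by move=> a; rewrite /fiota free_rb_evalE.
move=> g1 g2 [lin1 mul1 R1] iota1 [lin2 mul2 R2] iota2.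
elim/free_rb_ind; elim=> [a||t IHt u IHu|c t IH|t IHt u IHu|t IH].
- exact: (etrans (iota1 a) (esym (iota2 a))).
- by rewrite (lin0 lin1) (lin0 lin2).
- by rewrite -cl_add (linD lin1) (linD lin2) IHt IHu.
- by rewrite -cl_scale (linZ lin1) (linZ lin2) IH.
- by rewrite -fmulE mul1 mul2 IHt IHu.
- by rewrite -fRE R1 R2 IH.
Qed.

End FreeEnvelope.

(** * The filtration and the associated graded algebra *)

Section Filtration.
Variables (K : fieldType) (A U : lmodType K) (mU : U -> U -> U) (RU : U -> U)
  (iota : A -> U).
Hypothesis U_RBAs : is_RBAs mU RU.

Local Notation F := (filt mU RU iota).
Local Notation M := (mono mU RU iota).

Lemma mono_gt0 n x : M n x -> (0 < n)%N.
Proof. by elim=> // n0 m0 x0 y0 _ + _ _; rewrite addn_gt0 => ->. Qed.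

Lemma mono_filt n x : M n x -> F n x.
Proof. exact: filt_mono. Qed.

Lemma filt_leq m n x : (m <= n)%N -> F m x -> F n x.
Proof.
move=> le_mn; elim=> [|k y le_km|a y z _ Fy _ Fz].
- exact: filt_zero.
- exact: filt_mono (leq_trans le_km le_mn).
- exact: filt_comb.
Qed.

Lemma filt0_eq0 x : F 0 x -> x = 0.
Proof.
elim=> // [k y|a y z _ -> _ ->]; last by rewrite scaler0 addr0.
by rewrite leqn0 => /eqP -> /mono_gt0.
Qed.

Lemma filtD n x y : F n x -> F n y -> F n (x + y).
Proof. by move=> Fx Fy; have := filt_comb 1 Fx Fy; rewrite scale1r. Qed.

Lemma filtZ n a x : F n x -> F n (a *: x).
Proof. by move=> Fx; have := filt_comb a Fx (filt_zero _ _ _ _); rewrite addr0. Qed.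

Lemma filtN n x : F n x -> F n (- x).
Proof. by rewrite -scaleN1r; apply: filtZ. Qed.

Lemma filt_sum n m (G : 'I_m -> U) : (forall i, F n (G i)) -> F n (\sum_(i < m) G i).
Proof. by move=> FG; elim/big_ind: _ => //; [apply: filt_zero | apply: filtD]. Qed.

Lemma filt_mul a b u v : F a u -> F b v -> F (a + b) (mU u v).
Proof.
case: U_RBAs => [[mUl mUr] _ _ _] Fu; elim: Fu v => [|k x le_ka Mx|c x y _ IHx _ IHy] v.
- by rewrite (lin0 (mUr _)); constructor.
- elim=> [|l y le_lb My|c y z _ Fy _ Fz].
  + by rewrite (lin0 (mUl _)); constructor.
  + exact: filt_mono (leq_add le_ka le_lb) (mono_mul Mx My).
  + by rewrite mUl; apply: filt_comb.
- by move=> Fv; rewrite mUr; apply: filt_comb; [apply: IHx | apply: IHy].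
Qed.

Lemma filt_R n x : F n x -> F n (RU x).
Proof.
case: U_RBAs => [_ _ R_lin _]; elim=> [|k y le_kn My|c y z _ Fy _ Fz].
- by rewrite (lin0 R_lin); constructor.
- exact: filt_mono le_kn (mono_R My).
- by rewrite R_lin; apply: filt_comb.
Qed.

Local Notation gr_eq := (gr_eq mU RU iota).
Local Notation gr_mul := (gr_mul mU).
Local Notation gr_R := (gr_R RU).

Definition filt_seq (k : nat -> U) := forall n, F n (k n).

Lemma gr_eq_sym k l : gr_eq k l -> gr_eq l k.
Proof. by move=> kl n; rewrite -opprB; apply: filtN. Qed.

Lemma gr_eq_trans k l m : gr_eq k l -> gr_eq l m -> gr_eq k m.
Proof. by move=> kl lm n; rewrite -(subrKA (l n)); apply: filtD. Qed.

Lemma gr_eq_comb a k k' l l' : gr_eq k k' -> gr_eq l l' ->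
  gr_eq (fun n => a *: k n + l n) (fun n => a *: k' n + l' n).
Proof.
by move=> kk' ll' n; rewrite opprD addrACA -scalerBr; apply: filt_comb.
Qed.

Lemma gr_eq_mul k k' l l' : filt_seq k' -> filt_seq l ->
  gr_eq k k' -> gr_eq l l' -> gr_eq (gr_mul k l) (gr_mul k' l').
Proof.
case: U_RBAs => [[mUl mUr] _ _ _] Fk' Fl kk' ll' n.
rewrite /gr_mul -sumrB; apply: filt_sum => i.
have le_in : (i <= n)%N by rewrite -ltnS.
rewrite -(subrKA (mU (k' i) (l (n - i)%N))) -(linB (mUr _)) -(linB (mUl _)).
apply: filtD.
  case: (posnP i) (kk' i) => [-> /filt0_eq0 -> | i_gt0 Fi].
    by rewrite (lin0 (mUr _)); constructor.
  by apply: filt_leq (filt_mul Fi (Fl _)); lia.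
case: (posnP (n - i)%N) (ll' (n - i)%N) => [-> /filt0_eq0 -> | ni_gt0 Fni].
  by rewrite (lin0 (mUl _)); constructor.
by apply: filt_leq (filt_mul (Fk' i) Fni); lia.
Qed.

Lemma gr_eq_R k l : gr_eq k l -> gr_eq (gr_R k) (gr_R l).
Proof.
by case: U_RBAs => [_ _ R_lin _] kl n; rewrite /gr_R -(linB R_lin); apply: filt_R.
Qed.

Definition gr_single (i : nat) (u : U) : nat -> U := fun n => if n == i then u else 0.

Lemma gr_single_elem i u : F i u -> gr_elem mU RU iota (gr_single i u).
Proof.
move=> Fu; split=> [n|]; first by rewrite /gr_single; case: eqP => [->|_] //; constructor.
by exists i => n; rewrite /gr_single; case: eqP => // ->; rewrite ltnn.
Qed.

Lemma gr_single0 i : gr_single i 0 = (fun _ => 0).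
Proof. by apply: funext => n; rewrite /gr_single; case: eqP. Qed.

Lemma gr_single_comb i c x y :
  gr_single i (c *: x + y) = (fun n => c *: gr_single i x n + gr_single i y n).
Proof. by apply: funext => n; rewrite /gr_single; case: eqP; rewrite ?scaler0 ?addr0. Qed.

Lemma gr_single_low i w : F i.-1 w -> gr_eq (gr_single i w) (fun _ => 0).
Proof.
by move=> Fw n; rewrite /gr_single subr0; case: eqP => [->|_] //; constructor.
Qed.

Lemma gr_mul_single i j u v :
  gr_mul (gr_single i u) (gr_single j v) = gr_single (i + j) (mU u v).
Proof.
case: U_RBAs => [[mUl mUr] _ _ _]; apply: funext => n; rewrite /gr_mul.
have single_term (t : 'I_n.+1) : mU (gr_single i u t) (gr_single j v (n - t)%N) =
    if (t : nat) == i then gr_single (i + j) (mU u v) n else 0.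
  rewrite /gr_single; case: (eqVneq (t : nat) i) => [ti|_]; last by rewrite (lin0 (mUr _)).
  have le_tn : (t <= n)%N by rewrite -ltnS.
  have -> : (n - t == j)%N = (n == i + j)%N by apply/eqP/eqP; lia.
  by case: eqP; rewrite ?(lin0 (mUl _)).
rewrite (eq_bigr _ (fun t _ => single_term t)) -big_mkcond.
rewrite (big_ord1_eq _ (fun=> gr_single (i + j) (mU u v) n)) /gr_single.
by case: eqP => [->|]; [rewrite ltnS leq_addr | case: ifP].
Qed.

Lemma gr_R_single j v : gr_R (gr_single j v) = gr_single j (RU v).
Proof.
case: U_RBAs => [_ _ R_lin _]; apply: funext => n.
by rewrite /gr_R /gr_single; case: eqP; rewrite ?(lin0 R_lin).
Qed.

End Filtration.

(** * Products in the graded algebra are killed *)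

Section Killing.
Variables (K : fieldType) (A U : lmodType K) (mU : U -> U -> U) (RU : U -> U)
  (iota : A -> U).
Hypotheses (U_RBAs : is_RBAs mU RU) (iota_mul0 : forall a b, mU (iota a) (iota b) = 0).
Variables (U' : lmodType K) (mU' : U' -> U' -> U') (RU' : U' -> U')
  (Phi : U' -> nat -> U).
Hypothesis Phi_iso : gr_iso mU RU iota mU' RU' Phi.
Variables (B : lmodType K) (mB : B -> B -> B) (RB : B -> B) (g : U' -> B).
Hypothesis g_hom : RB_hom mU' RU' mB RB g.
Hypotheses (mB_Rl : forall x y, mB (RB x) y = 0) (mB_Rr : forall x y, mB x (RB y) = 0)
  (mB_mull : forall x y z, mB (mB x y) z = 0) (mB_mulr : forall x y z, mB x (mB y z) = 0).

Local Notation F := (filt mU RU iota).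
Local Notation M := (mono mU RU iota).
Local Notation gr_eq := (gr_eq mU RU iota).
Local Notation gr_elem := (gr_elem mU RU iota).
Local Notation filt_seq := (filt_seq mU RU iota).

Lemma Phi_elem x : gr_elem (Phi x). Proof. by case: Phi_iso. Qed.
Lemma Phi_filt x : filt_seq (Phi x). Proof. by case: (Phi_elem x). Qed.
Lemma Phi_comb a x y : gr_eq (Phi (a *: x + y)) (fun n => a *: Phi x n + Phi y n).
Proof. by case: Phi_iso => _ []. Qed.
Lemma Phi_mul x y : gr_eq (Phi (mU' x y)) (gr_mul mU (Phi x) (Phi y)).
Proof. by case: Phi_iso => _ [_ []]. Qed.
Lemma Phi_R x : gr_eq (Phi (RU' x)) (gr_R RU (Phi x)).
Proof. by case: Phi_iso => _ [_ [_ []]]. Qed.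
Lemma Phi_inj x : gr_eq (Phi x) (fun _ => 0) -> x = 0.
Proof. by case: Phi_iso => _ [_ [_ [_ [inj _]]]]; apply: inj. Qed.
Lemma Phi_surj k : gr_elem k -> exists x, gr_eq (Phi x) k.
Proof. by case: Phi_iso => _ [_ [_ [_ [_ surj]]]]; apply: surj. Qed.

Lemma Phi0 : gr_eq (Phi 0) (fun _ => 0).
Proof.
have := Phi_comb (-1) 0 0; rewrite scaler0 addr0 => /gr_eq_trans; apply => n.
by rewrite scaleN1r addNr subrr; constructor.
Qed.

Lemma Phi_mul_eq x y k l : filt_seq k -> gr_eq (Phi x) k -> gr_eq (Phi y) l ->
  gr_eq (Phi (mU' x y)) (gr_mul mU k l).
Proof.
move=> Fk xk yl; apply: gr_eq_trans (Phi_mul _ _) _.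
exact (gr_eq_mul U_RBAs Fk (Phi_filt y) xk yl).
Qed.

Lemma lift_single i u : F i u -> exists z, gr_eq (Phi z) (gr_single i u).
Proof. by move=> Fu; apply/Phi_surj/gr_single_elem. Qed.

Lemma lift_single_mul i j u v x y : F i u ->
  gr_eq (Phi x) (gr_single i u) -> gr_eq (Phi y) (gr_single j v) ->
  gr_eq (Phi (mU' x y)) (gr_single (i + j) (mU u v)).
Proof.
move=> Fu xu yv; rewrite -(gr_mul_single U_RBAs).
by apply: Phi_mul_eq xu yv; case: (gr_single_elem Fu).
Qed.

Lemma lift_single_R i u x :
  gr_eq (Phi x) (gr_single i u) -> gr_eq (Phi (RU' x)) (gr_single i (RU u)).
Proof.
move=> xu; rewrite -(gr_R_single U_RBAs).
exact: gr_eq_trans (Phi_R _) (gr_eq_R U_RBAs xu).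
Qed.

Definition killed (k : nat -> U) := exists x, gr_eq (Phi x) k /\ g x = 0.

Lemma killed_eq k l : killed k -> gr_eq k l -> killed l.
Proof. by move=> [x [xk gx]] kl; exists x; split=> //; apply: gr_eq_trans xk kl. Qed.

Lemma killed0 : killed (fun _ => 0).
Proof. by exists 0; split; [exact: Phi0 | case: g_hom => g_lin _ _; apply: lin0]. Qed.

Lemma killed_comb a k l : killed k -> killed l -> killed (fun n => a *: k n + l n).
Proof.
move=> [x [xk gx]] [y [yl gy]]; exists (a *: x + y); split.
  exact: gr_eq_trans (Phi_comb _ _ _) (gr_eq_comb _ xk yl).
by case: g_hom => g_lin _ _; rewrite g_lin gx gy scaler0 addr0.
Qed.

Lemma killed_sum m (G : 'I_m -> nat -> U) :
  (forall i, killed (G i)) -> killed (fun n => \sum_(i < m) G i n).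
Proof.
elim: m G => [|m IH] G kG.
  by apply: killed_eq killed0 _ => n; rewrite big_ord0 subrr; constructor.
have := killed_comb 1 (IH (fun i => G (widen_ord (leqnSn m) i)) (fun i => kG _)) (kG ord_max).
by move=> k; apply: killed_eq k _ => n; rewrite scale1r big_ord_recr subrr; constructor.
Qed.

Lemma killed_mono_mul i j u v : M i u -> M j v -> killed (gr_single (i + j) (mU u v)).
Proof.
case: g_hom => _ g_mul g_R.
have lift n w : M n w -> exists z, gr_eq (Phi z) (gr_single n w).
  by move=> Mw; apply/lift_single/mono_filt.
move=> Mu; case=> [b|j1 j2 v1 v2 Mv1 Mv2|j' v' Mv'].
- have [y e] := lift _ _ (mono_gen mU RU iota b).
  case: Mu => [a|i1 i2 u1 u2 Mu1 Mu2|i' u' Mu'].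
  + by rewrite iota_mul0 gr_single0; apply: killed0.
  + have [x1 e1] := lift _ _ Mu1; have [x2 e2] := lift _ _ Mu2.
    exists (mU' (mU' x1 x2) y); split; last by rewrite !g_mul mB_mull.
    apply: lift_single_mul e; first exact/(filt_mul U_RBAs)/mono_filt/Mu2/mono_filt.
    exact: lift_single_mul (mono_filt Mu1) e1 e2.
  + have [x e'] := lift _ _ Mu'.
    exists (mU' (RU' x) y); split; last by rewrite g_mul g_R mB_Rl.
    exact: lift_single_mul (filt_R U_RBAs (mono_filt Mu')) (lift_single_R e') e.
- have [x e] := lift _ _ Mu; have [y1 e1] := lift _ _ Mv1; have [y2 e2] := lift _ _ Mv2.
  exists (mU' x (mU' y1 y2)); split; last by rewrite !g_mul mB_mulr.
  exact: lift_single_mul (mono_filt Mu) e (lift_single_mul (mono_filt Mv1) e1 e2).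
- have [x e] := lift _ _ Mu; have [y e'] := lift _ _ Mv'.
  exists (mU' x (RU' y)); split; last by rewrite g_mul g_R mB_Rr.
  exact: lift_single_mul (mono_filt Mu) e (lift_single_R e').
Qed.

Lemma killed_single_mul i j u v : F i u -> F j v -> killed (gr_single (i + j) (mU u v)).
Proof.
case: U_RBAs => [[mUl mUr] _ _ _].
have low w : F (i + j).-1 w -> killed (gr_single (i + j) w).
  by move=> Fw; apply: killed_eq killed0 (gr_eq_sym (gr_single_low Fw)).
move=> Fu; elim: Fu v => [|k x le_ki Mx|c x y _ IHx _ IHy] v.
- by move=> _; rewrite (lin0 (mUr _)) gr_single0; apply: killed0.
- elim=> [|l y le_lj My|c y z _ ky _ kz].
  + by rewrite (lin0 (mUl _)) gr_single0; apply: killed0.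
  + have [/andP [/eqP <- /eqP <-] | ne] := boolP ((k == i) && (l == j)).
      exact: killed_mono_mul.
    apply/low/(filt_leq _ (filt_mul U_RBAs (mono_filt Mx) (mono_filt My))).
    by move: ne; rewrite negb_and => /orP [] /eqP; lia.
  + by rewrite mUl gr_single_comb; apply: killed_comb.
- by move=> Fv; rewrite mUr gr_single_comb; apply: killed_comb; [apply: IHx | apply: IHy].
Qed.

Lemma killed_gr_mul k l : gr_elem k -> gr_elem l -> killed (gr_mul mU k l).
Proof.
case: U_RBAs => [[mUl mUr] _ _ _] [Fk [N1 k0]] [Fl [N2 l0]].
have killed_deg m : killed (gr_single m (gr_mul mU k l m)).
  have -> : gr_single m (gr_mul mU k l m) =
      (fun n => \sum_(i < m.+1) gr_single m (mU (k i) (l (m - i)%N)) n).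
    by apply: funext => n; rewrite /gr_single /gr_mul; case: eqP => _ /=; rewrite ?big1_eq.
  apply: killed_sum => i; have le_im : (i <= m)%N by rewrite -ltnS.
  by rewrite -{1}(subnKC le_im); apply: killed_single_mul.
have deg_bound n : (N1 + N2 < n)%N -> gr_mul mU k l n = 0.
  move=> lt_n; rewrite /gr_mul big1 // => i _.
  have le_in : (i <= n)%N by rewrite -ltnS.
  have [lt_i|le_i] := ltnP N1 i; first by rewrite k0 // (lin0 (mUr _)).
  by rewrite l0 ?(lin0 (mUl _)) //; lia.
have -> : gr_mul mU k l =
    (fun n => \sum_(m < (N1 + N2).+1) gr_single m (gr_mul mU k l m) n).
  apply: funext => n; rewrite (eq_bigr (fun m : 'I_(N1 + N2).+1 =>
      if (m : nat) == n then gr_mul mU k l n else 0)); last first.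
    by move=> m _; rewrite /gr_single eq_sym; case: eqP => [->|].
  rewrite -big_mkcond (big_ord1_eq _ (fun=> gr_mul mU k l n)).
  by case: ltnP => // /deg_bound.
exact: killed_sum.
Qed.

Theorem gr_iso_mul_killed x y : g (mU' x y) = 0.
Proof.
have [z [z_xy gz]] := killed_gr_mul (Phi_elem x) (Phi_elem y).
suff -> : mU' x y = z by [].
apply/eqP; rewrite -subr_eq0 addrC -scaleN1r; apply/eqP/Phi_inj.
apply: gr_eq_trans (Phi_comb _ _ _) _ => n; rewrite subr0 scaleN1r addrC.
exact: (gr_eq_trans (Phi_mul x y) (gr_eq_sym z_xy)).
Qed.

End Killing.

(** * The counterexample *)

Section Counterexample.
Variable K : fieldType.

Definition K_succ (a b : K^o) : K^o := a * b.
Definition K_prec (a b : K^o) : K^o := 0.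

Lemma K_preAs : is_preAs K_succ K_prec.
Proof.
have zero_lin (_ : K^o) : lin (fun _ : K^o => 0 : K^o).
  by move=> a y z; rewrite scaler0 addr0.
split.
- split=> x a y z; rewrite /K_succ /GRing.scale /=.
    by rewrite mulrDr mulrCA.
  by rewrite mulrDl mulrA.
- by split=> x; apply: zero_lin.
- by move=> x1 x2 x3; rewrite /K_succ /K_prec addr0 mulrA.
- by move=> x1 x2 x3; rewrite /K_succ /K_prec mulr0.
- by [].
Qed.

Lemma K_iota_mul0 (U : lmodType K) (mU : U -> U -> U) (RU : U -> U) (iota : K^o -> U) :
  univ_env K_succ K_prec mU RU iota -> forall a b, mU (iota a) (iota b) = 0.
Proof.
case=> [[[_ mUr] mUA _ _] [iota_lin iota_succ iota_prec] _] a b.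
have -> : iota b = mU (RU (iota 1)) (iota b) by rewrite -[RHS]iota_succ /K_succ mul1r.
by rewrite -mUA -[mU _ (RU _)]iota_prec /K_prec (lin0 iota_lin) (lin0 (mUr _)).
Qed.

Definition nil2 := 'rV[K]_2.
Definition nil2_e : nil2 := delta_mx 0 0.
Definition nil2_f : nil2 := delta_mx 0 ord_max.
Definition nil2_mul (u v : nil2) : nil2 := (u 0 0 * v 0 0) *: nil2_f.
Definition nil2_R (u : nil2) : nil2 := 0.

Lemma nil2_mul00 u v : nil2_mul u v 0 0 = 0.
Proof. by rewrite !mxE mulr0. Qed.

Lemma nil2_mul0l v : nil2_mul 0 v = 0.
Proof. by rewrite /nil2_mul mxE mul0r scale0r. Qed.

Lemma nil2_mulRl u v : nil2_mul (nil2_R u) v = 0.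
Proof. exact: nil2_mul0l. Qed.

Lemma nil2_mulRr u v : nil2_mul u (nil2_R v) = 0.
Proof. by rewrite /nil2_mul mxE mulr0 scale0r. Qed.

Lemma nil2_mul_mull u v w : nil2_mul (nil2_mul u v) w = 0.
Proof. by rewrite /nil2_mul nil2_mul00 mul0r scale0r. Qed.

Lemma nil2_mul_mulr u v w : nil2_mul u (nil2_mul v w) = 0.
Proof. by rewrite /nil2_mul nil2_mul00 mulr0 scale0r. Qed.

Lemma nil2_RBAs : is_RBAs nil2_mul nil2_R.
Proof.
split.
- split=> [u a v w|w a u v]; rewrite /nil2_mul !mxE scalerA.
    by rewrite mulrDr scalerDl mulrCA.
  by rewrite mulrDl scalerDl mulrA.
- by move=> u v w; rewrite nil2_mul_mull nil2_mul_mulr.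
- by move=> a u v; rewrite /nil2_R scaler0 addr0.
- by move=> u v; rewrite nil2_mulRl.
Qed.

Lemma nil2_mul_ee : nil2_mul nil2_e nil2_e = nil2_f.
Proof. by rewrite /nil2_mul mxE mulr1 scale1r. Qed.

Lemma nil2_f_neq0 : nil2_f != 0.
Proof. by apply/eqP => /matrixP /(_ 0 ord_max); rewrite !mxE /=; apply/eqP/oner_neq0. Qed.

Lemma nil2_line_hom :
  preAs_hom (fun _ _ : K^o => 0) (fun _ _ : K^o => 0)
    (psi_succ nil2_mul nil2_R) (psi_prec nil2_mul nil2_R) (fun a : K^o => a *: nil2_e).
Proof.
split=> [a x y|x y|x y]; first by rewrite scalerA -scalerDl.
  by rewrite /psi_succ nil2_mulRl scale0r.
by rewrite /psi_prec nil2_mulRr scale0r.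
Qed.

End Counterexample.

Theorem corollary1 (K : fieldType) : ~ PBW_pair_RBAs_preAs K.
Proof.
move=> PBW.
have U_env := free_rb_univ_env (@K_succ K) (@K_prec K).
have U'_env := free_rb_univ_env (fun _ _ : K^o => 0 : K^o) (fun _ _ : K^o => 0 : K^o).
have [Phi Phi_iso] := PBW _ _ _ (K_preAs K) _ _ _ _ U_env _ _ _ _ U'_env.
case: U'_env => _ _ /(_ _ _ _ _ (nil2_RBAs K) (nil2_line_hom K)) [[g [g_hom g_e]] _].
have := gr_iso_mul_killed (free_rb_RBAs _ _) (K_iota_mul0 U_env) Phi_iso g_hom
  (@nil2_mulRl K) (@nil2_mulRr K) (@nil2_mul_mull K) (@nil2_mul_mulr K)
  (fiota _ _ 1) (fiota _ _ 1).
case: g_hom => _ g_mul _; rewrite g_mul !g_e scale1r nil2_mul_ee => f0.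
by have := nil2_f_neq0 K; rewrite f0 eqxx.
Qed.
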